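(* For all $t\ge 2$, in $\mathbb{F}_2[w_2,w_3]$ one has \[ r_{2^{t-1}-2}=q_{2^t-4},\qquad w_3r_{2^{t-1}-4}=q_{2^t-5},\qquad r_{2^{t-1}-1}=q_{2^t-2}. \]
   Context: In $\mathbb{F}_2[w_2,w_3]$: $q_0=1$, $q_m=0$ for $m<0$, $q_m=w_2q_{m-2}+w_3q_{m-3}$ for $m\ge1$; $r_0=1$, $r_m=0$ for $m<0$, $r_{m+1}=w_2r_m+w_3^2r_{m-2}$ for $m\ge0$. *)

From HB Require Import structures.
From mathcomp Require Import all_boot all_order all_algebra.
From mathcomp Require Import mpoly.
Set Implicit Arguments. Unset Strict Implicit. Unset Printing Implicit Defensive.
Import Order.TTheory GRing.Theory Num.Theory.
Local Open Scope ring_scope.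

Notation P := {mpoly 'F_2[2]}.
Definition w2 : P := 'X_(@Ordinal 2 0 isT).
Definition w3 : P := 'X_(@Ordinal 2 1 isT).

(* qtrip n = (q_n, q_{n-1}, q_{n-2}) with q_m = 0 for m < 0. *)
Fixpoint qtrip (n : nat) : P * P * P :=
  match n with
  | 0 => (1, 0, 0)
  | n'.+1 => let '(a, b, c) := qtrip n' in (w2 * b + w3 * c, a, b)
  end.

(* rtrip n = (r_n, r_{n-1}, r_{n-2}) with r_m = 0 for m < 0. *)
Fixpoint rtrip (n : nat) : P * P * P :=
  match n with
  | 0 => (1, 0, 0)
  | n'.+1 => let '(a, b, c) := rtrip n' in (w2 * a + w3 ^+ 2 * c, a, b)
  end.

Definition q (m : int) : P :=
  match m with Posz n => (qtrip n).1.1 | Negz _ => 0 end.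
Definition r (m : int) : P :=
  match m with Posz n => (rtrip n).1.1 | Negz _ => 0 end.

(* Squaring is additive in characteristic 2, so each recurrence admits doubling
   formulas: q_{2k} = q_k^2 + w2 q_{k-1}^2, q_{2k+1} = w3 q_{k-1}^2, r_{2k} = r_k^2
   and r_{2k+1} = w2 r_k^2 + w3^2 r_{k-1}^2.  For M a power of 2 they carry the
   identities r_{M-2} = q_{2M-4}, w3 r_{M-4} = q_{2M-5}, r_{M-1} = q_{2M-2} from M
   to 2M, using that q_{M-3} = 0, a fact that doubles as well since
   q_{2M-3} = w3 q_{M-3}^2. *)

From mathcomp Require Import all_boot all_algebra mpoly.
From mathcomp Require Import ring zify.

Set Implicit Arguments.
Unset Strict Implicit.

Import GRing.Theory.
Local Open Scope ring_scope.

Section Char2Recurrences.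

Variable R : comNzRingType.
Hypothesis pcharR2 : (2 \in [pchar R])%N.

Lemma sqrrD_pchar2 (x y : R) : (x + y) ^+ 2 = x ^+ 2 + y ^+ 2.
Proof. by rewrite sqrrD mulrn_pchar // addr0. Qed.

Section Recurrence23.

Variables (a b : R) (f : int -> R).
Hypotheses (f_neg : forall m : int, m < 0 -> f m = 0) (f0 : f 0 = 1).
Hypothesis f_rec : forall m : int, 0 < m -> f m = a * f (m - 2) + b * f (m - 3).

Let f_recE (m n p : int) : 0 < m -> m = n + 2 -> m = p + 3 ->
  f m = a * f n + b * f p.
Proof. by move=> m_gt0 en ep; rewrite f_rec //; congr (_ * f _ + _ * f _); lia. Qed.

Let double_pair (n : nat) :
  (f (2 * n%:Z) = f n ^+ 2 + a * f (n%:Z - 1) ^+ 2 /\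
   f (2 * n%:Z + 1) = b * f (n%:Z - 1) ^+ 2) /\
  f (2 * n%:Z - 1) = b * f (n%:Z - 2) ^+ 2.
Proof.
elim: n => [|n [[fe fo] fo']].
  rewrite mulr0 add0r sub0r f0 (@f_recE 1 (-1) (-2)) // !f_neg //.
  by rewrite expr1n expr0n !mulr0 !addr0.
have -> : n.+1%:Z - 1 = n by lia.
have -> : n.+1%:Z - 2 = n%:Z - 1 by lia.
have -> : 2 * n.+1%:Z - 1 = 2 * n%:Z + 1 by lia.
have fn : f n.+1 = a * f (n%:Z - 1) + b * f (n%:Z - 2) by apply: f_recE; lia.
have f_even : f (2 * n.+1) = a * f (2 * n%:Z) + b * f (2 * n%:Z - 1).
  by apply: f_recE; lia.
have f_odd : f (2 * n.+1 + 1) = a * f (2 * n%:Z + 1) + b * f (2 * n%:Z).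
  by apply: f_recE; lia.
split; last exact: fo.
rewrite f_even f_odd fe fo fo' fn sqrrD_pchar2; split; first by ring.
rewrite -[RHS]addr0 -(addrr_pchar2 pcharR2 (a * b * f (n%:Z - 1) ^+ 2)); ring.
Qed.

Lemma rec23_double (k : int) :
  f (2 * k) = f k ^+ 2 + a * f (k - 1) ^+ 2 /\ f (2 * k + 1) = b * f (k - 1) ^+ 2.
Proof.
case: k => [n|n]; first exact: (double_pair n).1.
by rewrite !f_neg ?expr0n ?mulr0 ?addr0 //; lia.
Qed.

End Recurrence23.

Section Recurrence13.

Variables (a c : R) (g : int -> R).
Hypotheses (g_neg : forall m : int, m < 0 -> g m = 0) (g0 : g 0 = 1).
Hypothesis g_rec : forall m : int, 0 < m -> g m = a * g (m - 1) + c * g (m - 3).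

Let g_recE (m n p : int) : 0 < m -> m = n + 1 -> m = p + 3 ->
  g m = a * g n + c * g p.
Proof. by move=> m_gt0 en ep; rewrite g_rec //; congr (_ * g _ + _ * g _); lia. Qed.

Let double_pair (n : nat) :
  (g (2 * n%:Z) = g n ^+ 2 /\
   g (2 * n%:Z + 1) = a * g n ^+ 2 + c * g (n%:Z - 1) ^+ 2) /\
  g (2 * n%:Z - 1) = a * g (n%:Z - 1) ^+ 2 + c * g (n%:Z - 2) ^+ 2.
Proof.
elim: n => [|n [[ge go] go']].
  rewrite mulr0 add0r sub0r g0 (@g_recE 1 0 (-2)) // g0 !g_neg //.
  by rewrite expr1n expr0n !mulr0 !addr0 mulr1.
have -> : n.+1%:Z - 1 = n by lia.
have -> : n.+1%:Z - 2 = n%:Z - 1 by lia.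
have -> : 2 * n.+1%:Z - 1 = 2 * n%:Z + 1 by lia.
have gn : g n.+1 = a * g n + c * g (n%:Z - 2) by apply: g_recE; lia.
have g_even : g (2 * n.+1) = a * g (2 * n%:Z + 1) + c * g (2 * n%:Z - 1).
  by apply: g_recE; lia.
have g_odd : g (2 * n.+1 + 1) = a * g (2 * n.+1) + c * g (2 * n%:Z).
  by apply: g_recE; lia.
have g_even_sq : g (2 * n.+1) = g n.+1 ^+ 2.
  rewrite g_even go go' gn sqrrD_pchar2 -[RHS]addr0.
  rewrite -(addrr_pchar2 pcharR2 (a * c * g (n%:Z - 1) ^+ 2)); ring.
by rewrite g_odd g_even_sq ge.
Qed.

Lemma rec13_double (k : int) :
  g (2 * k) = g k ^+ 2 /\ g (2 * k + 1) = a * g k ^+ 2 + c * g (k - 1) ^+ 2.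
Proof.
case: k => [n|n]; first exact: (double_pair n).1.
by rewrite !g_neg ?expr0n ?mulr0 ?addr0 //; lia.
Qed.

End Recurrence13.

End Char2Recurrences.

Lemma pchar2_P : (2 \in [pchar P])%N.
Proof. by rewrite pchar_lalg pchar_Fp. Qed.

Lemma q_neg (m : int) : m < 0 -> q m = 0.
Proof. by case: m. Qed.

Lemma r_neg (m : int) : m < 0 -> r m = 0.
Proof. by case: m. Qed.

Lemma qtripE (n : nat) : qtrip n = (q n, q (n%:Z - 1), q (n%:Z - 2)).
Proof.
elim: n => [//|n IHn].
have -> : n.+1%:Z - 1 = n by lia.
have -> : n.+1%:Z - 2 = n%:Z - 1 by lia.
by rewrite [qtrip _]/= IHn [q n.+1]/= IHn.
Qed.

Lemma rtripE (n : nat) : rtrip n = (r n, r (n%:Z - 1), r (n%:Z - 2)).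
Proof.
elim: n => [//|n IHn].
have -> : n.+1%:Z - 1 = n by lia.
have -> : n.+1%:Z - 2 = n%:Z - 1 by lia.
by rewrite [rtrip _]/= IHn [r n.+1]/= IHn.
Qed.

Lemma q_rec (m : int) : 0 < m -> q m = w2 * q (m - 2) + w3 * q (m - 3).
Proof.
case: m => [[|n]|] // _.
have -> : n.+1%:Z - 2 = n%:Z - 1 by lia.
have -> : n.+1%:Z - 3 = n%:Z - 2 by lia.
by rewrite [q n.+1]/= qtripE.
Qed.

Lemma r_rec (m : int) : 0 < m -> r m = w2 * r (m - 1) + w3 ^+ 2 * r (m - 3).
Proof.
case: m => [[|n]|] // _.
have -> : n.+1%:Z - 1 = n by lia.
have -> : n.+1%:Z - 3 = n%:Z - 2 by lia.
by rewrite [r n.+1]/= rtripE.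
Qed.

Lemma q0 : q 0 = 1. Proof. by []. Qed.
Lemma r0 : r 0 = 1. Proof. by []. Qed.

Lemma q_double (k : int) : q (2 * k) = q k ^+ 2 + w2 * q (k - 1) ^+ 2.
Proof. exact: (rec23_double pchar2_P q_neg q0 q_rec k).1. Qed.

Lemma q_double_add1 (k : int) : q (2 * k + 1) = w3 * q (k - 1) ^+ 2.
Proof. exact: (rec23_double pchar2_P q_neg q0 q_rec k).2. Qed.

Lemma r_double (k : int) : r (2 * k) = r k ^+ 2.
Proof. exact: (rec13_double pchar2_P r_neg r0 r_rec k).1. Qed.

Lemma r_double_add1 (k : int) :
  r (2 * k + 1) = w2 * r k ^+ 2 + w3 ^+ 2 * r (k - 1) ^+ 2.
Proof. exact: (rec13_double pchar2_P r_neg r0 r_rec k).2. Qed.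

Definition rq_identities (M : int) : Prop :=
  [/\ r (M - 2) = q (2 * M - 4), w3 * r (M - 4) = q (2 * M - 5)
    & r (M - 1) = q (2 * M - 2)].

Lemma q_double_sub3 (M : int) : q (M - 3) = 0 -> q (2 * M - 3) = 0.
Proof.
move=> qM3; have -> : 2 * M - 3 = 2 * (M - 2) + 1 by ring.
rewrite q_double_add1 (_ : M - 2 - 1 = M - 3); last ring.
by rewrite qM3 expr0n mulr0.
Qed.

Lemma q_pow2_sub3 (u : nat) : q ((2 ^ u.+1)%N%:Z - 3) = 0.
Proof.
elim: u => [|u IHu]; first exact: q_neg.
by rewrite expnS PoszM q_double_sub3.
Qed.

Lemma rq_identities_double (M : int) :
  q (M - 3) = 0 -> rq_identities M -> rq_identities (2 * M).
Proof.
move=> qM3 [rqM2 _ rqM1].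
have q2M3 := q_double_sub3 qM3.
have q2M1 : q (2 * M - 1) = w3 * q (M - 2) ^+ 2.
  have -> : 2 * M - 1 = 2 * (M - 1) + 1 by ring.
  by rewrite q_double_add1 (_ : M - 1 - 1 = M - 2); last ring.
have q2M4 : q (2 * M - 4) = q (M - 2) ^+ 2.
  have -> : 2 * M - 4 = 2 * (M - 2) by ring.
  rewrite q_double (_ : M - 2 - 1 = M - 3); last ring.
  by rewrite qM3 expr0n mulr0 addr0.
split.
- rewrite (_ : 2 * M - 2 = 2 * (M - 1)); last ring.
  rewrite (_ : 2 * (2 * M) - 4 = 2 * (2 * M - 2)); last ring.
  rewrite r_double q_double (_ : 2 * M - 2 - 1 = 2 * M - 3); last ring.
  by rewrite q2M3 rqM1 expr0n mulr0 addr0.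
- rewrite (_ : 2 * M - 4 = 2 * (M - 2)); last ring.
  rewrite (_ : 2 * (2 * M) - 5 = 2 * (2 * M - 3) + 1); last ring.
  rewrite r_double q_double_add1 (_ : 2 * M - 3 - 1 = 2 * M - 4); last ring.
  by rewrite rqM2.
- rewrite (_ : 2 * (2 * M) - 2 = 2 * (2 * M - 1)); last ring.
  rewrite q_double q2M1 (_ : 2 * M - 1 - 1 = 2 * M - 2); last ring.
  rewrite (_ : 2 * M - 1 = 2 * (M - 1) + 1); last ring.
  rewrite r_double_add1 (_ : M - 1 - 1 = M - 2); last ring.
  by rewrite rqM1 rqM2 q2M4 addrC; ring.
Qed.

Lemma rq_identities_pow2 (u : nat) : rq_identities (2 ^ u.+1)%N.
Proof.
elim: u => [|u IHu].
  by split; rewrite //= ?r_neg ?q_neg ?mulr0.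
by rewrite expnS PoszM; apply: rq_identities_double (q_pow2_sub3 u) IHu.
Qed.

Theorem mainTheorem16 (t : nat) (ht : (2 <= t)%N) :
  [/\ r ((2 ^ t.-1)%N%:Z - 2) = q ((2 ^ t)%N%:Z - 4),
      w3 * r ((2 ^ t.-1)%N%:Z - 4) = q ((2 ^ t)%N%:Z - 5)
    & r ((2 ^ t.-1)%N%:Z - 1) = q ((2 ^ t)%N%:Z - 2)].
Proof.
case: t ht => [|[|u]] // _.
by rewrite expnS PoszM; apply: rq_identities_pow2.
Qed.
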